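(* Let $P>0$, $\epsilon\in(0,P)$, $P'=P-\epsilon$. For each positive integer $\ell$ let $k_\ell\in(0,\ell]$ with $\lim_{\ell\to\infty}\ell e^{-\delta k_\ell}=0$ for every $\delta>0$; let $\delta_\ell=k_\ell^{-1/3}$ and $n(\ell)=\frac{\ell H_2(k_\ell/\ell)}{\frac12\log(1+k_\ell P)}$. Suppose $n(\ell)/k_\ell$ has a finite limit or diverges to $+\infty$, and set $n_0=(1+\epsilon)n(\ell)$ if $\lim n(\ell)/k_\ell>0$ and $n_0=\epsilon k_\ell$ if $\lim n(\ell)/k_\ell=0$. For an integer $a\ge1$ let $\mathcal W^{(\ell)}(a)$ be the set of integer pairs $(w_1,w_2)$ with $0\le w_1\le a$, $0\le w_2\le(1+\delta_\ell)k_\ell$, $w_1+w_2>0$ and $a+w_2\le(1+\delta_\ell)k_\ell+w_1$, and define $$h_{\lambda,\rho}(w_1,w_2)=-\frac{(1-\rho)n_0}{2k_\ell}\log(1+\lambda w_2P')+\frac{n_0}{2k_\ell}\log\big(1+\lambda(1-\lambda\rho)w_2P'+\lambda\rho(1-\lambda\rho)w_1P'\big)-\frac a{k_\ell}H_2\Big(\frac{w_1}a\Big)-\frac{\rho\ell}{k_\ell}H_2\Big(\frac{w_2}\ell\Big).$$ Then there exist $\ell^*>0$ and $c_0>0$ such that for every $\ell\ge\ell^*$, every integer $a$ with $1\le a\le(1+\delta_\ell)k_\ell$, and every $(w_1,w_2)\in\mathcal W^{(\ell)}(a)$, there exist $\lambda\in[0,\infty)$ and $\rho\in[0,1]$ with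 $h_{\lambda,\rho}(w_1,w_2)\ge c_0$.
   Context: Logarithms are natural; $H_2(p)=-p\log p-(1-p)\log(1-p)$ for $p\in[0,1]$. (Here $a$ plays the role of the number of truly active users, $w_1$ of the number of misses and $w_2$ of the number of false alarms.) *)

From Stdlib Require Import Reals.
From Coquelicot Require Import Coquelicot.
Open Scope R_scope.

(* Binary entropy in nats: H2(p) = -p ln p - (1-p) ln(1-p).
   Stdlib's ln is total with ln x = 0 for x <= 0, so H2 0 = H2 1 = 0. *)
Definition H2 (p : R) : R := - p * ln p - (1 - p) * ln (1 - p).

Definition nfun (P : R) (k : nat -> R) (l : nat) : R :=
  INR l * H2 (k l / INR l) / (/ 2 * ln (1 + k l * P)).

Definition deltaf (k : nat -> R) (l : nat) : R := Rpower (k l) (- (1 / 3)).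

Definition n0f (P eps : R) (k : nat -> R) (L : Rbar) (l : nat) : R :=
  if Rbar_lt_dec (Finite 0) L then (1 + eps) * nfun P k l else eps * k l.

Definition harg (P' lam rho w1 w2 : R) : R :=
  1 + lam * (1 - lam * rho) * w2 * P' + lam * rho * (1 - lam * rho) * w1 * P'.

Definition hfun (P' n0 kl l a lam rho w1 w2 : R) : R :=
  - ((1 - rho) * n0 / (2 * kl)) * ln (1 + lam * w2 * P')
  + n0 / (2 * kl) * ln (harg P' lam rho w1 w2)
  - a / kl * H2 (w1 / a)
  - rho * l / kl * H2 (w2 / l).

Definition inW (dl kl : R) (a w1 w2 : nat) : Prop :=
  (w1 <= a)%nat /\ INR w2 <= (1 + dl) * kl /\ (0 < w1 + w2)%nat /\
  INR a + INR w2 <= (1 + dl) * kl + INR w1.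

From Stdlib Require Import Reals Lra Psatz.
From Coquelicot Require Import Coquelicot.
Open Scope R_scope.

(* Take lambda = 1/2 and rho = 1: the first logarithm of h disappears and h becomes
   N ln(1 + (w1 + w2) P'/4) - (a/k) H2(w1/a) - (l/k) H2(w2/l), with N = n0/(2k).
   By m H2(x/m) <= x (ln(m/x) + 1), the entropy term of a nonzero w = x splits into
   (x/k) ln(k/x), which is at most ln k / sqrt k plus a small multiple of
   ln(1 + x P'/4), and a term linear in x, which concavity of ln(1 + .) reduces to the
   largest admissible x.  For the misses that term is O(1) against N ln k; for the false
   alarms it is (1 + delta)(ln(l/k) + 1), and ln(l/k) <= (n(l)/(2k)) ln(1 + k P), so the
   factor 1 + eps in n0 (or n(l)/k -> 0 when n0 = eps k) leaves a constant margin. *)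

Lemma ln_nonpos x : x <= 0 -> ln x = 0.
Proof. intro Hx. unfold ln. destruct (Rlt_dec 0 x); [exfalso; lra | reflexivity]. Qed.

Lemma ln_ge_0 x : 1 <= x -> 0 <= ln x.
Proof. intro Hx. rewrite <- ln_1. apply ln_le; lra. Qed.

Lemma ln_le_sub_1 y : 0 < y -> ln y <= y - 1.
Proof.
  intro Hy. rewrite <- (ln_exp (y - 1)). apply ln_le; [exact Hy |].
  pose proof (exp_ineq1_le (y - 1)). lra.
Qed.

Lemma ln_le_tangent u v : 0 < u -> 0 < v -> ln u <= ln v + (u - v) / v.
Proof.
  intros Hu Hv. pose proof (ln_le_sub_1 (u / v)) as H.
  rewrite ln_div in H by lra.
  assert (E : u / v - 1 = (u - v) / v) by (field; lra).
  assert (0 < u / v) by (apply Rdiv_lt_0_compat; lra). lra.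
Qed.

Lemma mul_ln_1_plus_le t Y : 0 <= t <= 1 -> 0 <= Y -> t * ln (1 + Y) <= ln (1 + t * Y).
Proof.
  intros Ht HY. set (v := 1 + t * Y).
  assert (Hv : 0 < v) by (unfold v; nra).
  pose proof (ln_le_tangent 1 v ltac:(lra) Hv) as T0.
  pose proof (ln_le_tangent (1 + Y) v ltac:(lra) Hv) as T1.
  rewrite ln_1 in T0.
  assert (E : (1 - t) * ((1 - v) / v) + t * ((1 + Y - v) / v) = 0)
    by (unfold v in *; field; lra).
  assert (0 <= (1 - t) * (ln v + (1 - v) / v)) by (apply Rmult_le_pos; lra).
  assert (t * ln (1 + Y) <= t * (ln v + (1 + Y - v) / v)) by (apply Rmult_le_compat_l; lra).
  lra.
Qed.

Lemma ln_1_plus_scale_le x X c gamma A :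
  0 <= x <= X -> 0 < X -> 0 <= c -> 0 <= gamma ->
  A <= gamma * ln (1 + X * c) -> x / X * A <= gamma * ln (1 + x * c).
Proof.
  intros Hx HX Hc Hg HA.
  assert (Ht : 0 <= x / X <= 1).
  { split; [apply Rdiv_le_0_compat; lra |].
    apply Rmult_le_reg_r with X; [lra |]. field_simplify; lra. }
  pose proof (mul_ln_1_plus_le (x / X) (X * c) Ht ltac:(nra)) as Hch.
  replace (x / X * (X * c)) with (x * c) in Hch by (field; lra).
  apply Rle_trans with (x / X * (gamma * ln (1 + X * c))).
  - apply Rmult_le_compat_l; lra.
  - replace (x / X * (gamma * ln (1 + X * c))) with (gamma * (x / X * ln (1 + X * c))) by ring.
    apply Rmult_le_compat_l; lra.
Qed.

Lemma H2_0 : H2 0 = 0.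
Proof. unfold H2. rewrite ln_nonpos by lra. replace (1 - 0) with 1 by ring. rewrite ln_1. ring. Qed.

Lemma neg_mul_ln_le q : 0 < q -> - q * ln q <= 1 - q.
Proof.
  intro Hq. pose proof (ln_le_sub_1 (/ q) ltac:(apply Rinv_0_lt_compat; lra)) as H.
  rewrite ln_Rinv in H by lra.
  assert (E : q * (/ q - 1) = 1 - q) by (field; lra).
  assert (q * - ln q <= q * (/ q - 1)) by (apply Rmult_le_compat_l; lra). lra.
Qed.

Lemma H2_le p : 0 < p -> H2 p <= p * (1 - ln p).
Proof.
  intro Hp. unfold H2.
  destruct (Rle_dec (1 - p) 0) as [Hn | Hq].
  - rewrite (ln_nonpos _ Hn). lra.
  - pose proof (neg_mul_ln_le (1 - p) ltac:(lra)). lra.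
Qed.

Lemma H2_ge p : 0 < p <= 1 -> - p * ln p <= H2 p.
Proof.
  intro Hp. unfold H2.
  destruct (Rle_dec (1 - p) 0) as [Hn | Hq].
  - rewrite (ln_nonpos _ Hn). lra.
  - assert (ln (1 - p) <= 0) by (rewrite <- ln_1; apply ln_le; lra). nra.
Qed.

Lemma mul_H2_div_le m x : 0 < m -> 0 < x -> m * H2 (x / m) <= x * (ln (m / x) + 1).
Proof.
  intros Hm Hx.
  assert (Hp : 0 < x / m) by (apply Rdiv_lt_0_compat; lra).
  assert (E : m * (x / m * (1 - ln (x / m))) = x * (ln (m / x) + 1)).
  { rewrite !ln_div by lra. field. lra. }
  rewrite <- E. apply Rmult_le_compat_l; [lra |]. now apply H2_le.
Qed.

Lemma ln_div_le_mul_H2 K l : 0 < K <= l -> ln (l / K) <= l / K * H2 (K / l).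
Proof.
  intro HK.
  assert (Hp : 0 < K / l <= 1).
  { split; [apply Rdiv_lt_0_compat; lra |].
    apply Rmult_le_reg_r with l; [lra |]. field_simplify; lra. }
  assert (E : l / K * (- (K / l) * ln (K / l)) = ln (l / K)).
  { rewrite !ln_div by lra. field. lra. }
  rewrite <- E. apply Rmult_le_compat_l; [apply Rdiv_le_0_compat; lra |]. now apply H2_ge.
Qed.

(* Below [sqrt K] the factor [x / K] is small; above it [ln (1 + x c)] is large. *)
Lemma div_mul_ln_div_le x K c gamma :
  1 <= x -> 1 <= K -> 0 < c -> 0 <= gamma -> 1 <= gamma * ln (1 + sqrt K * c) ->
  x / K * ln (K / x) <= ln K / sqrt K + gamma * ln (1 + x * c).
Proof.
  intros Hx HK Hc Hg Hgam.
  assert (HsK : 0 < sqrt K) by (apply sqrt_lt_R0; lra).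
  assert (HsK2 : sqrt K * sqrt K = K) by (apply sqrt_sqrt; lra).
  assert (HlnK : 0 <= ln K) by (apply ln_ge_0; lra).
  assert (Hlx : 0 <= gamma * ln (1 + x * c)) by (apply Rmult_le_pos; [lra | apply ln_ge_0; nra]).
  destruct (Rle_dec x (sqrt K)) as [Hle | Hgt].
  - assert (ln (K / x) <= ln K).
    { rewrite ln_div by lra. pose proof (ln_ge_0 x Hx). lra. }
    assert (0 <= ln (K / x)).
    { apply ln_ge_0. apply Rmult_le_reg_r with x; [lra |]. field_simplify; nra. }
    assert (x / K * ln (K / x) <= sqrt K / K * ln K).
    { apply Rmult_le_compat; try lra.
      - apply Rdiv_le_0_compat; lra.
      - unfold Rdiv. apply Rmult_le_compat_r; [apply Rlt_le, Rinv_0_lt_compat |]; lra. }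
    assert (Hq : sqrt K / K = / sqrt K) by (rewrite <- HsK2 at 2; field; lra).
    assert (ln K / sqrt K = sqrt K / K * ln K) by (rewrite Hq; unfold Rdiv; ring).
    lra.
  - assert (ln (K / x) <= K / x - 1) by (apply ln_le_sub_1, Rdiv_lt_0_compat; lra).
    assert (x / K * ln (K / x) <= x / K * (K / x - 1))
      by (apply Rmult_le_compat_l; [apply Rdiv_le_0_compat |]; lra).
    assert (x / K * (K / x - 1) = 1 - x / K) by (field; lra).
    assert (0 < x / K) by (apply Rdiv_lt_0_compat; lra).
    assert (gamma * ln (1 + sqrt K * c) <= gamma * ln (1 + x * c))
      by (apply Rmult_le_compat_l; [| apply ln_le]; nra).
    assert (0 <= ln K / sqrt K) by (apply Rdiv_le_0_compat; lra).
    lra.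
Qed.

Lemma entropy_term_le c K s M x eta beta c0 :
  0 < c -> 1 <= K -> 1 <= x <= s * K -> 0 < M -> 0 <= eta -> 0 <= beta ->
  1 <= eta * ln (1 + sqrt K * c) ->
  ln K / sqrt K + c0 <= eta * ln (1 + c) ->
  s * (ln (M / K) + 1) <= beta * ln (1 + s * K * c) ->
  M / K * H2 (x / M) + c0 <= (2 * eta + beta) * ln (1 + x * c).
Proof.
  intros Hc HK Hx HM Heta Hbeta Hsqrt Hsmall Hscale.
  assert (HsK : 0 < s * K) by lra.
  assert (Hs : 0 < s) by nra.
  assert (Hentropy : M / K * H2 (x / M) <= x / K * ln (K / x) + x / (s * K) * (s * (ln (M / K) + 1))).
  { assert (E : x / K * ln (K / x) + x / (s * K) * (s * (ln (M / K) + 1))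
                = / K * (x * (ln (M / x) + 1))).
    { rewrite !ln_div by lra. field. lra. }
    rewrite E. replace (M / K * H2 (x / M)) with (/ K * (M * H2 (x / M))) by (field; lra).
    apply Rmult_le_compat_l; [apply Rlt_le, Rinv_0_lt_compat; lra |].
    apply mul_H2_div_le; lra. }
  pose proof (div_mul_ln_div_le x K c eta ltac:(lra) HK Hc Heta Hsqrt) as Hsmall_x.
  pose proof (ln_1_plus_scale_le x (s * K) c beta (s * (ln (M / K) + 1)) ltac:(lra) HsK
                ltac:(lra) Hbeta Hscale) as Hlarge_x.
  assert (eta * ln (1 + c) <= eta * ln (1 + x * c))
    by (apply Rmult_le_compat_l; [| apply ln_le]; nra).
  lra.
Qed.

Lemma entropy_term_nat_le c K s M (w : nat) eta beta c0 :
  0 < c -> 1 <= K -> INR w <= s * K -> 0 < M -> 0 <= eta -> 0 <= beta ->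
  1 <= eta * ln (1 + sqrt K * c) ->
  ln K / sqrt K + c0 <= eta * ln (1 + c) ->
  s * (ln (M / K) + 1) <= beta * ln (1 + s * K * c) ->
  M / K * H2 (INR w / M) + (if Nat.eqb w 0 then 0 else c0)
    <= (2 * eta + beta) * ln (1 + INR w * c).
Proof.
  intros Hc HK Hw HM Heta Hbeta Hsqrt Hsmall Hscale.
  destruct (Nat.eqb_spec w 0) as [-> | Hw0].
  - simpl. replace (0 / M) with 0 by (field; lra). rewrite H2_0.
    replace (1 + 0 * c) with 1 by ring. rewrite ln_1. lra.
  - apply (entropy_term_le c K s M (INR w) eta beta c0); try assumption.
    split; [apply (le_INR 1); lia | exact Hw].
Qed.

Lemma harg_half_one P' w1 w2 : harg P' (1 / 2) 1 w1 w2 = 1 + (w1 + w2) * (P' / 4).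
Proof. unfold harg. field. Qed.

Lemma hfun_half_one P' n0 K l a w1 w2 :
  hfun P' n0 K l a (1 / 2) 1 w1 w2
  = n0 / (2 * K) * ln (1 + (w1 + w2) * (P' / 4)) - a / K * H2 (w1 / a) - l / K * H2 (w2 / l).
Proof. unfold hfun. rewrite harg_half_one. unfold Rdiv. ring. Qed.

Lemma entropy_sum_le c K l d N eta beta c0 (a w1 w2 : nat) :
  0 < c -> 1 <= K <= l -> 0 <= d -> 0 <= eta -> 0 <= beta -> 0 <= c0 ->
  5 * eta + beta <= N ->
  1 <= eta * ln (1 + sqrt K * c) ->
  ln K / sqrt K + c0 <= eta * ln (1 + c) ->
  2 * (ln 2 + 1) <= eta * ln (1 + 2 * K * c) ->
  (1 + d) * (ln (l / K) + 1) <= beta * ln (1 + K * c) ->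
  (1 <= a)%nat -> INR a <= 2 * K -> (w1 <= a)%nat -> INR w2 <= (1 + d) * K ->
  (0 < w1 + w2)%nat ->
  INR a / K * H2 (INR w1 / INR a) + l / K * H2 (INR w2 / l) + c0
    <= N * ln (1 + (INR w1 + INR w2) * c).
Proof.
  intros Hc HK Hd Heta Hbeta Hc0 HN Hsqrt Hsmall Hmiss Hfalse Ha Ha2 Hw1 Hw2 Hw.
  assert (Ha1 : 1 <= INR a) by (apply (le_INR 1); exact Ha).
  assert (Hw1a : INR w1 <= INR a) by (apply le_INR; exact Hw1).
  pose proof (pos_INR w1). pose proof (pos_INR w2).
  assert (Hmisses : INR a / K * H2 (INR w1 / INR a) + (if Nat.eqb w1 0 then 0 else c0)
                    <= (2 * eta + eta) * ln (1 + INR w1 * c)).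
  { apply (entropy_term_nat_le c K 2); try lra.
    assert (ln (INR a / K) <= ln 2).
    { apply ln_le; [apply Rdiv_lt_0_compat; lra |].
      apply Rmult_le_reg_r with K; [lra |]. field_simplify; lra. }
    lra. }
  assert (Hfalses : l / K * H2 (INR w2 / l) + (if Nat.eqb w2 0 then 0 else c0)
                    <= (2 * eta + beta) * ln (1 + INR w2 * c)).
  { apply (entropy_term_nat_le c K (1 + d)); try lra.
    apply Rle_trans with (1 := Hfalse). apply Rmult_le_compat_l; [lra |].
    assert (0 <= d * (K * c)) by (apply Rmult_le_pos; nra).
    apply ln_le; nra. }
  set (S := ln (1 + (INR w1 + INR w2) * c)).
  assert (ln (1 + INR w1 * c) <= S) by (apply ln_le; nra).
  assert (ln (1 + INR w2 * c) <= S) by (apply ln_le; nra).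
  assert (0 <= ln (1 + INR w1 * c)) by (apply ln_ge_0; nra).
  assert (0 <= ln (1 + INR w2 * c)) by (apply ln_ge_0; nra).
  assert (Hsplit : (2 * eta + eta) * ln (1 + INR w1 * c) + (2 * eta + beta) * ln (1 + INR w2 * c)
                   <= N * S).
  { assert (0 <= S) by lra.
    assert ((2 * eta + eta) * ln (1 + INR w1 * c) <= (2 * eta + eta) * S)
      by (apply Rmult_le_compat_l; lra).
    assert ((2 * eta + beta) * ln (1 + INR w2 * c) <= (2 * eta + beta) * S)
      by (apply Rmult_le_compat_l; lra).
    assert (0 <= (N - 5 * eta - beta) * S) by (apply Rmult_le_pos; lra).
    lra. }
  revert Hmisses Hfalses.
  destruct (Nat.eqb_spec w1 0); destruct (Nat.eqb_spec w2 0); intros; try lia; lra.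
Qed.

Lemma k_tends_to_infinity (k : nat -> R) :
  (forall delta : R, 0 < delta ->
     is_lim_seq (fun l : nat => INR l * exp (- delta * k l)) 0) ->
  is_lim_seq k p_infty.
Proof.
  intro Hexp. apply is_lim_seq_spec. intro B.
  pose proof (Hexp 1 ltac:(lra)) as H1. apply is_lim_seq_spec in H1.
  destruct (H1 (mkposreal 1 ltac:(lra))) as [N1 HN1].
  pose proof is_lim_seq_INR as H2. apply is_lim_seq_spec in H2.
  destruct (H2 (exp B)) as [N2 HN2].
  exists (Nat.max N1 N2). intros l Hl.
  specialize (HN1 l ltac:(lia)). specialize (HN2 l ltac:(lia)). simpl in HN1.
  rewrite Rminus_0_r, Rabs_pos_eq in HN1
    by (apply Rmult_le_pos; [pose proof (exp_pos B) | apply Rlt_le, exp_pos]; lra).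
  assert (Hlt : exp (B - k l) < exp 0).
  { rewrite exp_0. unfold Rminus. rewrite exp_plus.
    replace (- k l) with (- (1) * k l) by ring.
    apply Rle_lt_trans with (2 := HN1).
    apply Rmult_le_compat_r; [apply Rlt_le, exp_pos | lra]. }
  apply exp_lt_inv in Hlt. lra.
Qed.

Lemma ln_1_plus_mul_eventually_ge c W :
  0 < c -> Rbar_locally p_infty (fun K => W <= ln (1 + K * c)).
Proof.
  intro Hc. exists ((exp W - 1) / c). intros K HK.
  rewrite <- (ln_exp W). apply ln_le; [apply exp_pos |].
  apply Rmult_lt_compat_r with (r := c) in HK; [| exact Hc].
  replace ((exp W - 1) / c * c) with (exp W - 1) in HK by (field; lra). lra.
Qed.

Lemma ln_1_plus_sqrt_eventually_ge c W :
  0 < c -> Rbar_locally p_infty (fun K => W <= ln (1 + sqrt K * c)).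
Proof. intro Hc. exact (filterlim_sqrt_p _ (ln_1_plus_mul_eventually_ge c W Hc)). Qed.

Lemma ln_div_sqrt_eventually_le c0 :
  0 < c0 -> Rbar_locally p_infty (fun K => ln K / sqrt K <= c0).
Proof.
  intro Hc0.
  assert (Hlim : is_lim (fun K => ln (sqrt K) / sqrt K) p_infty 0)
    by exact (filterlim_comp _ _ _ _ _ _ _ _ filterlim_sqrt_p is_lim_div_ln_p).
  apply is_lim_spec in Hlim.
  destruct (Hlim (mkposreal (c0 / 2) ltac:(lra))) as [M HM]. simpl in HM.
  exists (Rmax M 0). intros K HK.
  assert (HK0 : 0 < K) by (apply Rle_lt_trans with (2 := HK), Rmax_r).
  specialize (HM K ltac:(apply Rle_lt_trans with (2 := HK), Rmax_l)).
  apply Rabs_lt_between in HM.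
  assert (HsK : 0 < sqrt K) by (apply sqrt_lt_R0; lra).
  assert (E : ln K / sqrt K = 2 * (ln (sqrt K) / sqrt K)).
  { rewrite <- (sqrt_sqrt K) at 1 by lra. rewrite ln_mult by lra. field. lra. }
  lra.
Qed.

Lemma Rpower_eventually_le a e :
  a < 0 -> 0 < e -> Rbar_locally p_infty (fun K => Rpower K a <= e).
Proof.
  intros Ha He. exists (exp (ln e / a)). intros K HK.
  assert (HK0 : 0 < K) by (apply Rlt_trans with (2 := HK), exp_pos).
  apply ln_increasing in HK; [| apply exp_pos]. rewrite ln_exp in HK.
  unfold Rpower. rewrite <- (exp_ln e) by lra. apply Rlt_le, exp_increasing.
  apply Rmult_lt_compat_l with (r := - a) in HK; [| lra].
  replace (- a * (ln e / a)) with (- ln e) in HK by (field; lra). lra.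
Qed.

Lemma is_lim_seq_eventually_ge (u : nat -> R) L :
  is_lim_seq u L -> Rbar_lt 0 L -> exists m0, 0 < m0 /\ eventually (fun n => m0 <= u n).
Proof.
  intros Hu HL. apply is_lim_seq_spec in Hu.
  destruct L as [x | |]; simpl in HL, Hu.
  - destruct (Hu (mkposreal (x / 2) ltac:(lra))) as [N HN].
    exists (x / 2). split; [lra |]. exists N. intros n Hn.
    specialize (HN n Hn). apply Rabs_lt_between in HN. simpl in HN. lra.
  - destruct (Hu 1) as [N HN]. exists 1. split; [lra |].
    exists N. intros n Hn. specialize (HN n Hn). lra.
  - contradiction.
Qed.

Lemma is_lim_seq_eventually_le (u : nat -> R) L mu :
  is_lim_seq u L -> ~ Rbar_lt 0 L -> 0 < mu -> eventually (fun n => u n <= mu).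
Proof.
  intros Hu HL Hmu. apply is_lim_seq_spec in Hu.
  destruct L as [x | |]; simpl in HL, Hu.
  - destruct (Hu (mkposreal mu Hmu)) as [N HN]. exists N. intros n Hn.
    specialize (HN n Hn). apply Rabs_lt_between in HN. simpl in HN. lra.
  - contradiction.
  - destruct (Hu mu) as [N HN]. exists N. intros n Hn. specialize (HN n Hn). lra.
Qed.

Lemma ln_1_plus_mul_le_add K P c :
  0 < c <= P -> 0 <= K -> ln (1 + K * P) <= ln (1 + K * c) + ln (P / c).
Proof.
  intros Hc HK. rewrite <- ln_mult by (try apply Rdiv_lt_0_compat; nra).
  apply ln_le; [nra |].
  assert (1 <= P / c) by (apply Rmult_le_reg_r with c; [lra |]; field_simplify; lra).
  replace ((1 + K * c) * (P / c)) with (P / c + K * P) by (field; lra). lra.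
Qed.

Lemma ln_div_le_nfun P c (k : nat -> R) l :
  0 < c <= P -> 0 < k l <= INR l ->
  0 <= ln (INR l / k l) <= nfun P k l / k l / 2 * (ln (1 + k l * c) + ln (P / c)).
Proof.
  intros Hc Hk.
  assert (HlnP : 0 < ln (1 + k l * P)) by (rewrite <- ln_1; apply ln_increasing; nra).
  assert (HA : ln (INR l / k l) <= nfun P k l / k l / 2 * ln (1 + k l * P)).
  { replace (nfun P k l / k l / 2 * ln (1 + k l * P)) with (INR l / k l * H2 (k l / INR l))
      by (unfold nfun; field; lra).
    now apply ln_div_le_mul_H2. }
  assert (0 <= ln (INR l / k l)).
  { apply ln_ge_0. apply Rmult_le_reg_r with (k l); [lra |]. field_simplify; lra. }
  assert (0 <= nfun P k l / k l / 2) by nra.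
  split; [assert (0 <= ln (INR l / k l)) by lra; assumption |].
  apply Rle_trans with (1 := HA), Rmult_le_compat_l; [lra |].
  apply ln_1_plus_mul_le_add; lra.
Qed.

Lemma budget_ineq_of_ratio_ge eps d A m m0 lc g :
  0 < eps -> 0 <= d <= eps / 4 -> 0 < m0 <= m -> 0 <= A ->
  A <= m / 2 * (lc + g) ->
  4 / eps * ((1 + eps / 4) * g + (2 + eps / 2) / m0) <= lc ->
  (1 + d) * (A + 1) <= (1 + eps / 2) * (m / 2) * lc.
Proof.
  intros Heps Hd Hm HA HAm Hlc.
  assert (Hgap : (1 + eps / 4) * (m / 2 * g + 1) <= eps / 4 * (m / 2) * lc).
  { assert (E : 4 / eps * ((1 + eps / 4) * g + (2 + eps / 2) / m0) * (eps / 4 * (m / 2))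
                = (1 + eps / 4) * (m / 2 * g + m / m0)) by (field; lra).
    assert (1 <= m / m0) by (apply Rmult_le_reg_r with m0; [lra |]; field_simplify; lra).
    assert (4 / eps * ((1 + eps / 4) * g + (2 + eps / 2) / m0) * (eps / 4 * (m / 2))
            <= lc * (eps / 4 * (m / 2))) by (apply Rmult_le_compat_r; nra).
    nra. }
  assert ((1 + d) * (A + 1) <= (1 + eps / 4) * (A + 1)) by (apply Rmult_le_compat_r; lra).
  assert ((1 + eps / 4) * (A + 1) <= (1 + eps / 4) * (m / 2 * (lc + g) + 1))
    by (apply Rmult_le_compat_l; lra).
  nra.
Qed.

Lemma budget_ineq_of_ratio_le eps d A m lc g :
  0 < eps -> 0 <= d <= 1 -> m <= eps / 8 -> 0 <= A -> 0 <= g ->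
  A <= m / 2 * (lc + g) ->
  g + 16 / eps <= lc ->
  (1 + d) * (A + 1) <= eps / 4 * lc.
Proof.
  intros Heps Hd Hm HA Hg HAm Hlc.
  assert (0 < 16 / eps) by (apply Rdiv_lt_0_compat; lra).
  assert (A <= eps / 16 * (lc + g)) by (apply Rle_trans with (1 := HAm); apply Rmult_le_compat_r; lra).
  assert ((1 + d) * (A + 1) <= 2 * (A + 1)) by (apply Rmult_le_compat_r; lra).
  assert (E : eps / 8 * (g + 16 / eps) = eps / 8 * g + 2) by (field; lra).
  assert (eps / 8 * (g + 16 / eps) <= eps / 8 * lc) by (apply Rmult_le_compat_l; lra).
  lra.
Qed.

(* [d] stands for [delta_l]: at the extreme point [w2 = (1 + d) k] the false-alarm entropy
   costs at most [(1 + d) (ln (l / k) + 1)]. *)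
Definition false_alarm_budget (P eps : R) (k : nat -> R) (theta n0 : R) (l : nat) : Prop :=
  forall d, 0 <= d <= 1 -> d <= eps / 4 ->
  (1 + d) * (ln (INR l / k l) + 1) <= theta * (n0 / (2 * k l)) * ln (1 + k l * ((P - eps) / 4)).

Section RateBudget.

Variables (P eps : R) (k : nat -> R).
Hypotheses (Heps : 0 < eps) (HepsP : eps < P)
  (Hk : forall l : nat, (1 <= l)%nat -> 0 < k l <= INR l) (Hkinf : is_lim_seq k p_infty).

Let c := (P - eps) / 4.
Let g := ln (P / c).

Let Hc : 0 < c <= P.
Proof. unfold c. lra. Qed.

Let Hg : 0 <= g.
Proof. apply ln_ge_0. apply Rmult_le_reg_r with c; [lra |]. field_simplify; lra. Qed.

Lemma ln_ratio_eventually : eventually (fun l => 0 < k l <= INR l /\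
  0 <= ln (INR l / k l) <= nfun P k l / k l / 2 * (ln (1 + k l * c) + g)).
Proof.
  exists 1%nat. intros l Hl. specialize (Hk l Hl).
  split; [exact Hk |]. now apply ln_div_le_nfun.
Qed.

Lemma false_alarm_budget_of_ratio_ge m0 :
  0 < m0 -> eventually (fun l => m0 <= nfun P k l / k l) ->
  eventually (fun l => (1 + eps) * m0 / 2 <= (1 + eps) * nfun P k l / (2 * k l) /\
    false_alarm_budget P eps k ((1 + eps / 2) / (1 + eps)) ((1 + eps) * nfun P k l) l).
Proof.
  intros Hm0 Hratio.   pose proof (Hkinf _ (ln_1_plus_mul_eventually_ge c
                (4 / eps * ((1 + eps / 4) * g + (2 + eps / 2) / m0)) ltac:(lra))) as Hlarge.
  generalize (filter_and _ _ ln_ratio_eventually (filter_and _ _ Hratio Hlarge)).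
  apply filter_imp. intros l ((Hkl & HA) & Hm & Hlc). unfold false_alarm_budget.
  set (m := nfun P k l / k l) in *.
  replace ((1 + eps) * nfun P k l / (2 * k l)) with ((1 + eps) * m / 2) by (unfold m; field; lra).
  split.
  - apply Rmult_le_compat_r; [lra |]. apply Rmult_le_compat_l; lra.
  - intros d Hd1 Hd. fold c.
    replace ((1 + eps / 2) / (1 + eps) * ((1 + eps) * m / 2))
      with ((1 + eps / 2) * (m / 2)) by (field; lra).
    apply (budget_ineq_of_ratio_ge eps d _ m m0 _ g); lra.
Qed.

Lemma false_alarm_budget_of_ratio_small :
  eventually (fun l => nfun P k l / k l <= eps / 8) ->
  eventually (fun l => eps / 2 <= eps * k l / (2 * k l) /\
    false_alarm_budget P eps k (1 / 2) (eps * k l) l).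
Proof.
  intro Hratio.   pose proof (Hkinf _ (ln_1_plus_mul_eventually_ge c (g + 16 / eps) ltac:(lra))) as Hlarge.
  generalize (filter_and _ _ ln_ratio_eventually (filter_and _ _ Hratio Hlarge)).
  apply filter_imp. intros l ((Hkl & HA) & Hm & Hlc). unfold false_alarm_budget.
  replace (eps * k l / (2 * k l)) with (eps / 2) by (field; lra).
  split; [lra |]. intros d Hd1 Hd. fold c.
  replace (1 / 2 * (eps / 2)) with (eps / 4) by field.
  apply (budget_ineq_of_ratio_le eps d _ (nfun P k l / k l) _ g); lra.
Qed.

Lemma n0_budget_eventually L :
  is_lim_seq (fun l : nat => nfun P k l / k l) L ->
  exists Nmin theta, 0 < Nmin /\ 0 <= theta < 1 /\
    eventually (fun l => Nmin <= n0f P eps k L l / (2 * k l) /\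
                         false_alarm_budget P eps k theta (n0f P eps k L l) l).
Proof.
  intro Hlim. unfold n0f. destruct (Rbar_lt_dec (Finite 0) L) as [HL | HL].
  - destruct (is_lim_seq_eventually_ge _ _ Hlim HL) as (m0 & Hm0 & Hratio).
    exists ((1 + eps) * m0 / 2), ((1 + eps / 2) / (1 + eps)).
    split; [nra |]. split; [| exact (false_alarm_budget_of_ratio_ge m0 Hm0 Hratio)].
    split; [apply Rdiv_le_0_compat; lra |].
    apply Rmult_lt_reg_r with (1 + eps); [lra |]. field_simplify; lra.
  - exists (eps / 2), (1 / 2). split; [lra |]. split; [lra |].
    apply false_alarm_budget_of_ratio_small.
    exact (is_lim_seq_eventually_le _ _ (eps / 8) Hlim HL ltac:(lra)).
Qed.

End RateBudget.

Lemma entropy_thresholds_eventually c eta :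
  0 < c -> 0 < eta ->
  Rbar_locally p_infty (fun K => 1 <= K /\ 1 <= eta * ln (1 + sqrt K * c) /\
    ln K / sqrt K + eta * ln (1 + c) / 2 <= eta * ln (1 + c) /\
    2 * (ln 2 + 1) <= eta * ln (1 + 2 * K * c)).
Proof.
  intros Hc Heta.
  assert (Hc0 : 0 < eta * ln (1 + c) / 2).
  { assert (0 < ln (1 + c)) by (rewrite <- ln_1; apply ln_increasing; lra). nra. }
  repeat apply filter_and.
  - exists 1. intros; lra.
  - eapply filter_imp; [| exact (ln_1_plus_sqrt_eventually_ge c (/ eta) Hc)].
    intros K HK. rewrite <- (Rinv_r eta) at 1 by lra.
    apply Rmult_le_compat_l; lra.
  - eapply filter_imp; [| exact (ln_div_sqrt_eventually_le _ Hc0)].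
    intros K HK. lra.
  - eapply filter_imp;
      [| exact (ln_1_plus_mul_eventually_ge (2 * c) (2 * (ln 2 + 1) / eta) ltac:(lra))].
    intros K HK. replace (2 * K * c) with (K * (2 * c)) by ring.
    replace (2 * (ln 2 + 1)) with (eta * (2 * (ln 2 + 1) / eta)) by (field; lra).
    apply Rmult_le_compat_l; lra.
Qed.

Theorem lemma3 (P eps : R) (k : nat -> R) (L : Rbar) :
  0 < P -> 0 < eps -> eps < P ->
  (forall l : nat, (1 <= l)%nat -> 0 < k l <= INR l) ->
  (forall delta : R, 0 < delta ->
     is_lim_seq (fun l : nat => INR l * exp (- delta * k l)) 0) ->
  is_lim_seq (fun l : nat => nfun P k l / k l) L ->
  (is_finite L \/ L = p_infty) ->
  exists lstar c0 : R, 0 < lstar /\ 0 < c0 /\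
    forall l : nat, (1 <= l)%nat -> lstar <= INR l ->
    forall a : nat, (1 <= a)%nat -> INR a <= (1 + deltaf k l) * k l ->
    forall w1 w2 : nat, inW (deltaf k l) (k l) a w1 w2 ->
    exists lam rho : R, 0 <= lam /\ 0 <= rho <= 1 /\
      0 < harg (P - eps) lam rho (INR w1) (INR w2) /\
      c0 <= hfun (P - eps) (n0f P eps k L l) (k l) (INR l) (INR a)
              lam rho (INR w1) (INR w2).
Proof.
  intros _ Heps HepsP Hk Hexp Hlim _.
  pose proof (k_tends_to_infinity k Hexp) as Hkinf.
  destruct (n0_budget_eventually P eps k Heps HepsP Hk Hkinf L Hlim)
    as (Nmin & theta & HNmin & Htheta & [N2 HN2]).
  set (c := (P - eps) / 4) in *.
  assert (Hc : 0 < c) by (unfold c; lra).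
  set (eta := (1 - theta) * Nmin / 5).
  assert (Heta : 0 < eta) by (unfold eta; nra).
  destruct (Hkinf _ (filter_and _ _ (entropy_thresholds_eventually c eta Hc Heta)
                        (Rpower_eventually_le (- (1 / 3)) (Rmin (eps / 4) 1) ltac:(lra)
                           ltac:(apply Rmin_glb_lt; lra)))) as [N1 HN1].
  set (c0 := eta * ln (1 + c) / 2) in *.
  assert (Hc0 : 0 < c0).
  { assert (0 < ln (1 + c)) by (rewrite <- ln_1; apply ln_increasing; lra). unfold c0; nra. }
  exists (INR (Nat.max N1 N2) + 1), c0.
  split; [pose proof (pos_INR (Nat.max N1 N2)); lra |]. split; [exact Hc0 |].
  intros l Hl1 Hl a Ha Hal w1 w2 (Hw1 & Hw2 & Hw & _).
  assert (HN : (Nat.max N1 N2 <= l)%nat) by (apply INR_le; lra).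
  destruct (HN1 l ltac:(lia)) as ((HK1 & Hsqrt & Hsmall & Hmiss) & Hdelta).
  destruct (HN2 l ltac:(lia)) as (HNl & Hfalse). unfold false_alarm_budget in Hfalse.
  fold (deltaf k l) in Hdelta.
  assert (Hd0 : 0 < deltaf k l) by (unfold deltaf, Rpower; apply exp_pos).
  pose proof (Rmin_l (eps / 4) 1). pose proof (Rmin_r (eps / 4) 1).
  exists (1 / 2), 1. rewrite harg_half_one, hfun_half_one. fold c.
  set (N := n0f P eps k L l / (2 * k l)) in *.
  pose proof (pos_INR w1). pose proof (pos_INR w2).
  split; [lra |]. split; [lra |]. split; [nra |].
  assert (Hsplit : 5 * eta + theta * N <= N) by (unfold eta; nra).
  assert (Ha2 : INR a <= 2 * k l) by nra.
  pose proof (entropy_sum_le c (k l) (INR l) (deltaf k l) N eta (theta * N) c0 a w1 w2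
    Hc (conj HK1 (proj2 (Hk l Hl1))) ltac:(lra) ltac:(lra) ltac:(nra) ltac:(nra)
    Hsplit Hsqrt Hsmall Hmiss (Hfalse (deltaf k l) ltac:(lra) ltac:(lra))
    Ha Ha2 Hw1 Hw2 Hw). lra.
Qed.
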